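(* Let $p\neq2$ and let $A=\mathbb Z[S]$ be a commutative polynomial ring over a set $S$. Let $f_1,\dots,f_r$ be distinct nonzero elements of $A$ with $f_i\ne -f_j$ for all $i\ne j$. Then the elements $\langle f_1\rangle,\dots,\langle f_r\rangle$ of $X(A)$ are $\mathbb Z$-linearly independent.
   Context: For a commutative ring $B$, $V(b_0,b_1,\dots)=p(0,b_0,b_1,\dots)$ on $B^{\mathbb N_0}$, $\langle b\rangle=(b,b^p,b^{p^2},\dots)$, and $X(B)$ is the closed subgroup of $B^{\mathbb N_0}$ (product topology) generated by $\{V^n\langle b\rangle\mid n\ge0, b\in B\}$. *)

From HB Require Import structures.
From mathcomp Require Import all_boot all_order all_algebra.
From mathcomp Require Import monalg.
Set Implicit Arguments. Unset Strict Implicit. Unset Printing Implicit Defensive.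
Import GRing.Theory.
Local Open Scope ring_scope.

Definition polyZ (S : choiceType) := {malg int[{cmonom S}]}.

(* <b> = (b, b^p, b^(p^2), ...) as an element of B^{N_0}. *)
Definition teich (B : comNzRingType) (p : nat) (b : B) : nat -> B :=
  fun k => b ^+ (p ^ k).

(* Z-linear independence of a finite family in the additive group B^{N_0}
   (componentwise addition; X(B) is a subgroup of it). *)
Definition Zlin_indep (B : comNzRingType) (r : nat) (v : 'I_r -> nat -> B) : Prop :=
  forall n : 'I_r -> int,
    (forall k : nat, \sum_(i < r) (v i k) *~ (n i) = 0) -> forall i, n i = 0.

(* Substituting for each variable a suitable power of an integer N gives a ring
   morphism phi : Z[S] -> Z which kills no nonzero polynomial whose support lies in
   a given finite set of monomials and whose coefficients are smaller than N in
   absolute value: monomials are encoded by base-B numbers and polynomials by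
   base-N numbers.  With N larger than twice every coefficient of the f_i, phi
   kills no f_i and no f_i +- f_j, so the integers a_i = phi (f_i) are nonzero with
   pairwise distinct absolute values.  Applying phi to a relation
   sum_i n_i <f_i> = 0 gives sum_i n_i a_i ^ (p ^ k) = 0 for every k, and for large
   k the term with the largest |a_i| among those with n_i <> 0 outweighs all the
   others; so every n_i vanishes. *)

From HB Require Import structures.
From mathcomp Require Import all_boot all_order all_algebra finmap zify.
From mathcomp Require Import monalg.
Set Implicit Arguments. Unset Strict Implicit. Unset Printing Implicit Defensive.
Import Order.TTheory GRing.Theory Num.Theory.
Local Open Scope ring_scope.

Lemma sum_digits_eq0 (T : eqType) (s : seq T) (e : T -> nat) (c : T -> int) (N : nat) :
  uniq s -> {in s &, injective e} -> {in s, forall x, (`|c x| < N)%N} ->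
  \sum_(x <- s) c x * N%:Z ^+ e x = 0 -> {in s, forall x, c x = 0}.
Proof.
move=> s_uniq e_inj c_lt sum0 x xs; apply/eqP/negPn/negP => cx.
have exP : exists n, has (fun y => (c y != 0) && (e y == n)) s.
  by exists (e x); apply/hasP; exists x => //; rewrite cx eqxx.
case: (ex_minnP exP) => n0 /hasP[x0 x0s /andP[cx0 /eqP ex0]] n0_min.
have N_gt0 : (0 < N)%N by apply: leq_ltn_trans (c_lt x0 x0s).
(* All the other terms are divisible by N ^ n0.+1, hence so is c x0 * N ^ n0. *)
have dvd_rest : (N%:Z ^+ n0.+1 %| \sum_(y <- s | y != x0) c y * N%:Z ^+ e y)%Z.
  rewrite big_seq_cond; apply: rpred_sum => y /andP[ys yx0].
  have [->|cy] := eqVneq (c y) 0; first by rewrite mul0r dvdz0.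
  apply/dvdz_mull/dvdz_exp2l; rewrite ltn_neqAle n0_min ?andbT; last first.
    by apply/hasP; exists y => //; rewrite cy eqxx.
  by apply: contraNneq yx0 => ey; apply/eqP/(e_inj y x0); rewrite // ex0 ey.
move: sum0; rewrite (bigD1_seq x0) //= => /eqP; rewrite addr_eq0 => /eqP sum0.
have : (N%:Z ^+ n0.+1 %| c x0 * N%:Z ^+ n0)%Z by rewrite -ex0 sum0 rpredN ex0.
rewrite exprS dvdz_mul2r; last by rewrite expf_neq0 // eqz_nat -lt0n.
rewrite dvdzE /= => /(dvdn_leq _); rewrite absz_gt0 => /(_ cx0).
by rewrite leqNgt c_lt.
Qed.

Lemma bernoulli_expn (b m : nat) : ((b + m) * b ^ m <= b * b.+1 ^ m)%N.
Proof.
elim: m => [|m IH]; first by rewrite !expn0 !muln1 addn0.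
have := leq_mul (leqnn b.+1) IH; rewrite !expnS.
set X := (b.+1 ^ m)%N; set Y := (b ^ m)%N; nia.
Qed.

Lemma ltn_mul_expnS (C b m : nat) : (C * b < m)%N -> (C * b ^ m < b.+1 ^ m)%N.
Proof.
case: b => [|b] lt_m; first by rewrite muln0 in lt_m; rewrite exp0n // muln0 exp1n.
have := bernoulli_expn b.+1 m; set X := (b.+2 ^ m)%N; set Y := (b.+1 ^ m)%N.
have : (0 < Y)%N by rewrite expn_gt0.
nia.
Qed.

Lemma PoszX (n m : nat) : (n ^ m)%N%:Z = n%:Z ^+ m.
Proof. by rewrite -natz natrX natz. Qed.

Lemma power_sums_eq0 r (a n : 'I_r -> int) (e : nat -> nat) :
  (forall K, exists k, (K <= e k)%N) ->
  (forall i, a i != 0) -> (forall i j, i != j -> `|a i| != `|a j|) ->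
  (forall k, \sum_i a i ^+ e k * n i = 0) -> forall i, n i = 0.
Proof.
move=> e_unbounded a_neq0 a_dist sum0 i; apply/eqP/negPn/negP => ni.
have [i0 ni0 i0_max] :=
  @arg_maxP _ int _ i (fun j => n j != 0) (fun j => `|a j|) ni.
have [b ai0] : exists b : nat, `|a i0| = b%:Z + 1.
  by exists `|a i0|.-1; rewrite -PoszD addn1 prednK ?absz_gt0 // abszE.
have aj_le j : j != i0 -> n j != 0 -> `|a j| <= b%:Z.
  by move=> ji0 nj; rewrite -ltzD1 -ai0 lt_neqAle a_dist //=; exact: i0_max.
pose C := (\sum_j `|n j|)%N.
have [k ek] := e_unbounded (C * b).+1; set m := e k in ek.
have := sum0 k; rewrite (bigD1 i0) //= => /eqP; rewrite addr_eq0 => /eqP dominant.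
have lower : (b.+1 ^ m)%N%:Z <= `|a i0 ^+ m * n i0|.
  rewrite normrM normrX ai0 PoszX -addn1 PoszD -[leLHS]mulr1.
  by rewrite ler_wpM2l ?exprn_ge0 // -gtz0_ge1 normr_gt0.
have upper : `|a i0 ^+ m * n i0| <= (C * b ^ m)%N%:Z.
  rewrite dominant normrN (le_trans (ler_norm_sum _ _ _)) //.
  rewrite PoszM (big_morph Posz PoszD erefl) mulr_suml.
  rewrite [leRHS](bigD1 i0) //= ler_wpDl ?mulr_ge0 //.
  apply: ler_sum => j ji0; rewrite normrM normrX abszE mulrC.
  have [->|nj] := eqVneq (n j) 0; first by rewrite normr0 !mul0r.
  by rewrite ler_wpM2l // PoszX lerXn2r // ?aj_le.
by have := le_trans lower upper; rewrite lez_nat leqNgt ltn_mul_expnS.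
Qed.

Section MonomialCode.
Variable S : choiceType.
Implicit Types (V : seq S) (m : cmonom S) (M : {fset cmonom S}).

Lemma cm_le_mdeg m (s : S) : (m s <= mdeg m)%N.
Proof.
have [sm|] := boolP (s \in finsupp m); last by rewrite -cmE_eq0 => /eqP->.
by rewrite mdegE (big_fsetD1 s sm) leq_addr.
Qed.

Definition cm_code V (B : nat) m : nat := (\sum_(s <- V) m s * B ^ index s V)%N.

Lemma cm_code_inj V (B : nat) M :
  uniq V -> {in M, forall m, {subset finsupp m <= V}} ->
  {in M, forall m s, (m s < B)%N} -> {in M &, injective (cm_code V B)}.
Proof.
move=> V_uniq suppV expB m1 m2 m1M m2M code_eq; apply/eqP/cmP => s.
have index_inj : {in V &, injective (index^~ V)}.
  by move=> x y xV yV eq_index; rewrite -(nth_index x xV) eq_index nth_index.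
have digits_lt t : t \in V -> (`|(m1 t)%:Z - (m2 t)%:Z| < B)%N.
  by move=> _; have := expB _ m1M t; have := expB _ m2M t; lia.
have digits_sum0 :
    \sum_(t <- V) ((m1 t)%:Z - (m2 t)%:Z) * B%:Z ^+ index t V = 0.
  under eq_bigr => t _ do rewrite mulrBl -!PoszX -!PoszM.
  rewrite sumrB -!(big_morph Posz PoszD erefl).
  by move: code_eq; rewrite /cm_code => ->; rewrite subrr.
have [sV|sV] := boolP (s \in V).
  by apply/eqP; rewrite -eqz_nat -subr_eq0 (sum_digits_eq0 V_uniq index_inj digits_lt).
have outside_V m : m \in M -> m s = 0%N.
  by move=> mM; apply/eqP; rewrite cmE_eq0; apply: contra sV; apply: suppV.
by rewrite !outside_V.
Qed.

(* The value at the point x_s = N ^ (B ^ index s V) of the monomial m. *)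
Definition cm_eval V (B N : nat) m : int := N%:Z ^+ cm_code V B m.

Lemma cm_eval_mmorphism V (B N : nat) : mmorphism (cm_eval V B N).
Proof.
rewrite /cm_eval /cm_code; split=> [m1 m2|]; last first.
  by rewrite big1 // => s _; rewrite cm1.
rewrite -exprD -big_split; congr (_ ^+ _).
by apply: eq_bigr => s _; rewrite cmM mulnDl.
Qed.

End MonomialCode.

HB.instance Definition _ (S : choiceType) (V : seq S) (B N : nat) :=
  isMultiplicative.Build (cmonom S) int (cm_eval V B N) (cm_eval_mmorphism V B N).

Lemma separating_rmorphism_int (S : choiceType) (M : {fset cmonom S}) (c : nat) :
  exists phi : {rmorphism polyZ S -> int}, forall g : polyZ S,
    (msupp g `<=` M)%fset -> (forall m, (`|g@_m| <= c)%N) -> phi g = 0 -> g = 0.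
Proof.
pose V := enum_fset (\bigcup_(m <- M) finsupp m)%fset.
pose B := (\max_(m <- M) mdeg m).+1.
have suppV : {in M, forall m : cmonom S, {subset finsupp m <= V}}.
  by move=> m mM; apply/fsubsetP/bigfcup_sup.
have expB : {in M, forall (m : cmonom S) s, (m s < B)%N}.
  by move=> m mM s; rewrite ltnS (leq_trans (cm_le_mdeg m s)) ?leq_bigmax_seq.
exists (mmap idfun (cm_eval V B c.+1)) => g suppg coefg evalg0.
have code_inj := cm_code_inj (fset_uniq _) suppV expB.
have coef0 := sum_digits_eq0 (N := c.+1) (fset_uniq M) code_inj (fun m _ => coefg m).
apply/malgP => m; rewrite mcoeff0.
have [mM|/(contra (fsubsetP suppg m))/mcoeff_outdom //] := boolP (m \in M).
by apply: coef0 => //; move: evalg0; rewrite /= (mmapEw suppg).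
Qed.

Theorem lemma4p2 (p : nat) (hp : prime p) (hp2 : p != 2%N)
  (S : choiceType) (r : nat) (f : 'I_r -> polyZ S)
  (hinj : injective f)
  (hnz : forall i, f i != 0)
  (hneg : forall i j, i != j -> f i != - f j) :
  Zlin_indep (fun i => teich p (f i)).
Proof.
move=> n sum_eq0.
pose M := (\bigcup_(i <- index_enum 'I_r) msupp (f i))%fset.
have suppM i : (msupp (f i) `<=` M)%fset by apply: bigfcup_sup; rewrite ?mem_index_enum.
pose c := (\max_(i < r) \max_(m <- msupp (f i)) `|(f i)@_m|)%N.
have coefc i m : (`|(f i)@_m| <= c)%N.
  have [mf|/mcoeff_outdom-> //] := boolP (m \in msupp (f i)).
  exact: leq_trans (leq_bigmax_seq _ mf isT) (leq_bigmax_cond _ isT).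
have [phi phi_sep] := separating_rmorphism_int M (c + c).
have phi_subr_eq0 i j : phi (f i - f j) = 0 -> f i = f j.
  move/phi_sep => /(_ _ _)/eqP; rewrite subr_eq0 => /(_ _ _)/eqP; apply.
  - by rewrite (fsubset_trans (msuppB_le _ _)) // fsubUset !suppM.
  - by move=> m; rewrite mcoeffB; have := coefc i m; have := coefc j m; lia.
have phi_addr_eq0 i j : phi (f i + f j) = 0 -> f i = - f j.
  move/phi_sep => /(_ _ _)/eqP; rewrite addr_eq0 => /(_ _ _)/eqP; apply.
  - by rewrite (fsubset_trans (msuppD_le _ _)) // fsubUset !suppM.
  - by move=> m; rewrite mcoeffD; have := coefc i m; have := coefc j m; lia.
apply: (@power_sums_eq0 _ (phi \o f) n (expn p)) => [m|i|i j ij|k].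
- by exists m; apply/ltnW/ltn_expl/prime_gt1.
- apply: contra (hnz i) => /eqP/phi_sep fi0; apply/eqP/fi0; first exact: suppM.
  by move=> m; apply: leq_trans (coefc i m) (leq_addr _ _).
- rewrite /= eqr_norm2 -subr_eq0 -addr_eq0 -!(rmorphB phi) -rmorphD.
  apply/norP; split; apply/eqP.
  + by move/phi_subr_eq0/hinj/eqP; rewrite (negPf ij).
  + by move/phi_addr_eq0/eqP; rewrite (negPf (hneg i j ij)).
- have := congr1 phi (sum_eq0 k); rewrite raddf_sum raddf0 => phi_sum_eq0.
  rewrite -[RHS]phi_sum_eq0; apply: eq_bigr => i _.
  by rewrite raddfMz /teich mulrzz /= -(rmorphXn phi).
Qed.
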